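(* Let $V$ be a finite set and let $X$ be a real vector indexed by all subsets of $V$. Then $X$ satisfies $$\sum_{T\subseteq R}(-1)^{|R\setminus T|}X(T\cup Z)\le\begin{cases}1&\text{if }|R|=1,\\0&\text{otherwise,}\end{cases}\qquad\text{for all nonempty }R\subseteq V\text{ and all }Z\subseteq V\text{ with }Z\cap R=\emptyset,$$ if and only if it satisfies $$\sum_{T\subseteq R}(-1)^{|T|}\big(X(R\setminus T)-|R\setminus T|\big)\le0\qquad\text{for all nonempty }R\subseteq V.$$ *)

From mathcomp Require Import all_boot all_order all_algebra.

(* Both conditions are statements about the Möbius transform [mobius X] of X
   on the subset lattice: the second is [mobius X S <= [#|S| = 1]] after
   reindexing by complements, since the Möbius transform of [T |-> #|T|] is
   the indicator of singletons.  For Z disjoint from S, the transform of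
   [T |-> X (T :|: Z)] at S is the sum of [mobius X (S :|: W)] over
   W \subset Z; every term with W nonempty lives on a set of size at least 2,
   which gives the first condition from the second, and Z = set0 gives the
   converse. *)

From mathcomp Require Import all_boot all_order all_algebra zify.
Import Order.TTheory GRing.Theory Num.Theory.
Local Open Scope ring_scope.

Section SetInduction.
Variable V : finType.

Lemma setU1_ind (P : {set V} -> Prop) : P set0 ->
  (forall (z : V) (S : {set V}), z \notin S -> P S -> P (z |: S)) ->
  forall S, P S.
Proof.
move=> P0 PU1 S; elim: {S}#|S| {-2}S (erefl #|S|) => [|n IHn] S cardS.
  by move/eqP: cardS; rewrite cards_eq0 => /eqP ->.
have /set0Pn[z zS] : S != set0 by rewrite -card_gt0 cardS.
rewrite -(setD1K zS); apply: PU1; first by rewrite setD11.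
by apply: IHn; move: cardS; rewrite (cardsD1 z S) zS add1n => -[].
Qed.

Lemma big_subsetU1 (R : Type) (idx : R) (op : Monoid.com_law idx)
    (F : {set V} -> R) (z : V) (S : {set V}) : z \notin S ->
  \big[op/idx]_(T : {set V} | T \subset z |: S) F T =
  op (\big[op/idx]_(T : {set V} | T \subset S) F T)
     (\big[op/idx]_(T : {set V} | T \subset S) F (z |: T)).
Proof.
move=> zS; have notinT (T : {set V}) (TS : T \subset S) := contra (subsetP TS z) zS.
rewrite (bigID (fun T : {set V} => z \in T)) /= Monoid.mulmC; congr (op _ _).
  apply: eq_bigl => T; case: (boolP (z \in T)) => zT; rewrite ?andbF ?andbT.
    by apply/esym/negbTE; apply: (contraL (notinT T)).
  by rewrite -subDset (setDidPl _) // disjoint_sym disjoints1.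
rewrite (reindex_onto (fun T => z |: T) (fun T => T :\ z)) /=; last first.
  by move=> T /andP[_ zT]; rewrite setD1K.
apply: eq_bigl => T; rewrite setU11 andbT subUset sub1set setU11 /=.
apply/andP/idP => [[TzS /eqP <-] | TS].
  by rewrite subDset subUset sub1set setU11.
by rewrite setU1K ?notinT // (subset_trans TS (subsetU1 z S)).
Qed.

End SetInduction.

Section Mobius.
Variables (R : pzRingType) (V : finType).
Implicit Types (G H : {set V} -> R) (S Z : {set V}).

Definition mobius G S : R :=
  \sum_(T : {set V} | T \subset S) (-1) ^+ #|S :\: T| * G T.

Lemma mobiusD G H S :
  mobius (fun T => G T + H T) S = mobius G S + mobius H S.
Proof. by rewrite -big_split; apply: eq_bigr => T _; rewrite mulrDr. Qed.

Lemma mobiusB G H S :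
  mobius (fun T => G T - H T) S = mobius G S - mobius H S.
Proof. by rewrite -sumrB; apply: eq_bigr => T _; rewrite mulrBr. Qed.

Lemma mobiusU1 G (z : V) S : z \notin S ->
  mobius G (z |: S) = mobius (fun T => G (z |: T)) S - mobius G S.
Proof.
move=> zS; rewrite /mobius big_subsetU1 // addrC -sumrN.
congr (_ + _); apply: eq_bigr => T TS.
  have zT := contra (subsetP TS z) zS.
  rewrite setDUl (setDidPl _) ?disjoints1 // cardsU1 inE (negbTE zS) andbF.
  by rewrite exprS mulN1r mulNr.
by rewrite -setDDl setU1K.
Qed.

Lemma mobius1 S : mobius (fun=> 1) S = (S == set0)%:R.
Proof.
elim/setU1_ind: S => [|z S zS _].
  rewrite /mobius (big_pred1 set0) => [|T]; last by rewrite subset0.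
  by rewrite setD0 cards0 expr0 mulr1 eqxx.
by rewrite mobiusU1 // subrr; case: eqP => // /setP/(_ z); rewrite !inE eqxx.
Qed.

Lemma mobius_card S : mobius (fun T => #|T|%:R) S = (#|S| == 1)%:R.
Proof.
elim/setU1_ind: S => [|z S zS _].
  rewrite /mobius (big_pred1 set0) => [|T]; last by rewrite subset0.
  by rewrite cards0 mulr0.
rewrite mobiusU1 //.
have -> : mobius (fun T => #|z |: T|%:R) S = mobius (fun T => #|T|%:R + 1) S.
  apply: eq_bigr => T TS.
  by rewrite cardsU1 (contra (subsetP TS z) zS) add1n -natr1.
rewrite mobiusD addrAC subrr add0r mobius1.
by rewrite cardsU1 zS add1n eqSS cards_eq0.
Qed.

Lemma mobius_complement G S :
  mobius G S = \sum_(T : {set V} | T \subset S) (-1) ^+ #|T| * G (S :\: T).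
Proof.
have setDK (T : {set V}) : T \subset S -> S :\: (S :\: T) = T.
  by move=> TS; rewrite setDDr setDv set0U (setIidPr TS).
rewrite /mobius (reindex_onto (fun T => S :\: T) (fun T => S :\: T)) /=; last first.
  by move=> T /setDK.
apply: eq_big => T; last by case/andP=> _ /eqP ->.
apply/andP/idP => [[_ /eqP <-]|TS]; first exact: subsetDl.
by rewrite subsetDl setDK.
Qed.

Lemma mobius_setU G Z S : Z :&: S = set0 ->
  mobius (fun T => G (T :|: Z)) S = \sum_(W : {set V} | W \subset Z) mobius G (S :|: W).
Proof.
elim/setU1_ind: Z S => [|z Z zZ IHZ] S.
  move=> _; rewrite (big_pred1 set0) => [|W]; last by rewrite subset0.
  by rewrite setU0; apply: eq_bigr => T _; rewrite setU0.
move=> /eqP; rewrite setIUl setU_eq0 setI_eq0 disjoints1 => /andP[zS /eqP ZS].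
have ZzS : Z :&: (z |: S) = set0.
  by apply/eqP; rewrite setIUr setU_eq0 ZS eqxx andbT setI_eq0 disjoint_sym disjoints1.
rewrite big_subsetU1 //=; under [in Y in _ + Y]eq_bigr do rewrite setUCA setUA.
rewrite -!IHZ // mobiusU1 // addrC subrK.
by apply: eq_bigr => T _; rewrite setUCA setUA.
Qed.

End Mobius.

Arguments mobius {R V} G S.

Theorem lemma6p1 (R : realFieldType) (V : finType) (X : {set V} -> R) :
  (forall (S Z : {set V}), S != set0 -> Z :&: S = set0 ->
     \sum_(T : {set V} | T \subset S) (-1) ^+ #|S :\: T| * X (T :|: Z)
       <= (if #|S| == 1%N then 1 else 0))
  <->
  (forall S : {set V}, S != set0 ->
     \sum_(T : {set V} | T \subset S)
        (-1) ^+ #|T| * (X (S :\: T) - #|S :\: T|%:R) <= 0).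
Proof.
have indicatorE (b : bool) : (if b then 1 else 0) = b%:R :> R by case: b.
have secondE (S : {set V}) : \sum_(T : {set V} | T \subset S)
    (-1) ^+ #|T| * (X (S :\: T) - #|S :\: T|%:R) = mobius X S - (#|S| == 1)%:R.
  by rewrite -mobius_card -mobiusB mobius_complement.
split=> [first S S0 | second S Z S0 ZS].
  rewrite secondE subr_le0 -indicatorE; apply: le_trans (first S set0 S0 (set0I S)).
  by under [Y in _ <= Y]eq_bigr do rewrite setU0.
rewrite indicatorE -/(mobius (fun T => X (T :|: Z)) S) mobius_setU //.
rewrite (bigD1 set0) ?sub0set //= setU0 -[Y in _ <= Y]addr0 lerD //.
  by rewrite -subr_le0 -secondE second.
apply: sumr_le0 => W /andP[WZ W0].
have SW : S :&: W = set0 by apply/eqP; rewrite -subset0 -ZS setIC; apply: setSI.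
have SW0 : S :|: W != set0 by rewrite setU_eq0 negb_and S0.
have := second _ SW0; rewrite secondE subr_le0.
suff -> : (#|S :|: W| == 1) = false by [].
move: (cardsUI S W); rewrite SW cards0 addn0 => ->.
by rewrite -!card_gt0 in S0 W0; lia.
Qed.
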